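(* Let $L$ be a reduced Latin square of order $n$ with rows $\sigma_1,\dots,\sigma_n$ (as permutations), and let $\Theta=(\alpha,\beta,\gamma)\in\mathfrak A(L)$. Then for each $i=1,\dots,n$, the permutation $\sigma_{\alpha^{-1}(1)}^{-1}\sigma_{\alpha^{-1}(i)}$ has the same cycle structure as $\sigma_i$.
   Context: A Latin square of order $n$ is an $n\times n$ array with entries in $[n]$, each symbol once in each row and column. Permutations compose right to left. An isotopism $(\alpha,\beta,\gamma)\in S_n^3$ acts by $(\alpha,\beta,\gamma)(L)=L'$ with $L'(\alpha(r),\beta(c))=\gamma(L(r,c))$; $\mathfrak A(L)=\{\Theta\in S_n^3:\Theta(L)=L\}$ is the autotopy group. Rows and columns are viewed as permutations: if symbol $i$ appears in the $j$th place of a row (column) $\sigma$, then $\sigma(i)=j$; so row $r$ is $\sigma_r$ with $\sigma_r(L(r,c))=c$. $L$ is reduced if its first row and first column are the identity permutation. The cycle structure of a permutation is the multiset of lengths of the cycles in its disjoint cycle decomposition. *)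

From mathcomp Require Import all_boot all_fingroup.
Set Implicit Arguments. Unset Strict Implicit. Unset Printing Implicit Defensive.
Local Open Scope group_scope.

(* A Latin square of order n on symbols 'I_n (symbol k <-> k+1 of the paper). *)
Record latin_square (n : nat) := LatinSquare {
  ls_entry :> 'I_n -> 'I_n -> 'I_n;
  ls_row_inj : forall r, injective (ls_entry r);
  ls_col_inj : forall c, injective (fun r => ls_entry r c) }.

Definition row_perm n (L : latin_square n) (r : 'I_n) : {perm 'I_n} :=
  (perm (@ls_row_inj n L r))^-1.

Definition reduced n (L : latin_square n.+1) : Prop :=
  (forall c, L ord0 c = c) /\ (forall r, L r ord0 = r).

Definition autotopy n (L : latin_square n) (a b g : {perm 'I_n}) : Prop :=
  forall r c, L (a r) (b c) = g (L r c).

Definition cycle_structure (T : finType) (s : {perm T}) : seq nat :=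
  [seq #|X| | X : {set T} <- enum (porbits s)].

Definition same_cycle_structure (T : finType) (s t : {perm T}) : bool :=
  perm_eq (cycle_structure s) (cycle_structure t).

From mathcomp Require Import all_boot all_fingroup.
Set Implicit Arguments. Unset Strict Implicit. Unset Printing Implicit Defensive.
Local Open Scope group_scope.

(* An autotopy (a, b, g) rewrites row a(r) as sigma_(a r) = b sigma_r g^-1
   (right to left); since the first row of a reduced square is the identity,
   b = g sigma_(a^-1 1)^-1, and substituting gives
   sigma_(a^-1 1)^-1 sigma_(a^-1 i) = g^-1 sigma_i g.  Conjugate permutations
   have the same cycle structure, as conjugation by g maps cycles to cycles. *)

Section CycleStructureConjugation.

Variable T : finType.

Lemma porbitJ (s t : {perm T}) x : porbit (s ^ t) (t x) = t @: porbit s x.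
Proof.
apply/setP=> z; apply/porbitP/imsetP.
  by case=> k ->; exists ((s ^+ k) x); rewrite ?mem_porbit // -conjXg permJ.
by case=> y /porbitP [k ->] ->; exists k; rewrite -conjXg permJ.
Qed.

Lemma porbitsJ (s t : {perm T}) :
  porbits (s ^ t) = (fun X : {set T} => t @: X) @: porbits s.
Proof.
apply/setP=> Z; apply/imsetP/imsetP=> [[y _ ->] | [X /imsetP [x _ ->] ->]].
  by exists (porbit s (t^-1 y)); rewrite ?imset_f // -porbitJ permKV.
by exists (t x); rewrite ?porbitJ.
Qed.

Lemma same_cycle_structureJ (s t : {perm T}) : same_cycle_structure (s ^ t) s.
Proof.
pose image_by_t (X : {set T}) := t @: X.
have image_by_t_inj : injective image_by_t by apply/imset_inj/perm_inj.
have enum_porbitsJ : perm_eq (enum (porbits (s ^ t)))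
                             (map image_by_t (enum (porbits s))).
  apply: uniq_perm; rewrite ?enum_uniq ?map_inj_uniq ?enum_uniq // porbitsJ.
  move=> Z; rewrite mem_enum; apply/imsetP/mapP=> -[X];
    by [rewrite -mem_enum; exists X | rewrite mem_enum; exists X].
rewrite /same_cycle_structure /cycle_structure.
apply: perm_trans (perm_map _ enum_porbitsJ) _.
rewrite -map_comp (eq_map (g := fun X : {set T} => #|X|)) // => X /=.
by rewrite card_imset //; apply: perm_inj.
Qed.

End CycleStructureConjugation.

Section RowPermutations.

Variables (n : nat) (L : latin_square n).

Lemma row_permE r c : row_perm L r (L r c) = c.
Proof. by rewrite /row_perm -[L r c](permE (@ls_row_inj n L r)) permK. Qed.

Lemma row_permK r x : L r (row_perm L r x) = x.
Proof. by rewrite /row_perm -[RHS](permKV (perm (@ls_row_inj n L r)) x) permE. Qed.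

Lemma row_perm_autotopy (a b g : {perm 'I_n}) :
  autotopy L a b g -> forall r, row_perm L (a r) = g^-1 * row_perm L r * b.
Proof.
move=> autoL r; apply/permP=> x; set c := row_perm L r (g^-1 x).
have -> : x = L (a r) (b c) by rewrite autoL row_permK permKV.
by rewrite row_permE !permM autoL permK row_permE.
Qed.

End RowPermutations.

Lemma row_perm_reduced n (L : latin_square n.+1) :
  reduced L -> row_perm L ord0 = 1.
Proof. by case=> row0 _; apply/permP=> c; rewrite -{1}[c]row0 row_permE perm1. Qed.

Theorem lemma5p1 (n : nat) (L : latin_square n.+1) (a b g : {perm 'I_n.+1}) :
  reduced L -> autotopy L a b g ->
  forall i : 'I_n.+1,
    same_cycle_structure
      (row_perm L (a^-1 i) * (row_perm L (a^-1 ord0))^-1)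
      (row_perm L i).
Proof.
move=> redL autoL i.
have row_autotopy r : row_perm L r = g^-1 * row_perm L (a^-1 r) * b.
  by rewrite -(row_perm_autotopy autoL) permKV.
have b_eq : b = (row_perm L (a^-1 ord0))^-1 * g.
  rewrite -[b](mulKg (row_perm L (a^-1 ord0))); congr (_ * _).
  by apply: (mulgI g^-1); rewrite mulVg mulgA -row_autotopy row_perm_reduced.
have row_i_conj : row_perm L i =
    (row_perm L (a^-1 i) * (row_perm L (a^-1 ord0))^-1) ^ g.
  by rewrite (row_autotopy i) b_eq conjgE !mulgA.
by rewrite row_i_conj /same_cycle_structure perm_sym; apply: same_cycle_structureJ.
Qed.
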